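(* Every congestion game structure $\mathcal G=(\mathcal R,c,\mathcal S)$ is equivalent to a common-OD constrained routing game over a (two-terminal) series-parallel network.
   Context: A congestion game structure $\mathcal G=(\mathcal R,c,\mathcal S)$: finite resource set $\mathcal R$ with continuous nondecreasing costs $c_r:\mathbb R_+\to\mathbb R_+$, finite commodity set $\mathcal H$, each $h$ with a nonempty finite family $\mathcal S^h\subseteq 2^{\mathcal R}$ of strategies. For demand $\mu\in\mathbb R_+^{\mathcal H}$, a feasible flow is $f=(f^h_s)$, $f^h_s\ge0$, $\sum_{s\in\mathcal S^h}f^h_s=\mu^h$; loads $x_r=\sum_h\sum_{s\in\mathcal S^h:r\in s}f^h_s$; strategy cost $c_s(f)=\sum_{r\in s}c_r(x_r)$. A constrained routing game $(G,c,\mathcal P)$ consists of a directed multigraph $G=(V,E)$, edge costs $c_e$ (continuous nondecreasing), and for each commodity $h$ of a finite set $\mathcal H$ a nonempty set $\mathcal P^h$ of paths from an origin $O^h$ to a destination $D^h$; it is the congestion game with resources $E$ and strategy sets $\mathcal S^h=\mathcal P^h$ (paths viewed as edge sets). It is common-OD if all commodities share the same origin and destination. A two-terminal series-parallel network is a directed multigraph obtained from single edges by finitely many series compositions (identifying the destination of one with the origin of the other) and parallel compositions (identifying origins and identifying destinations). Two congestion games are equivalent if there are bijections $h\leftrightarrow\tilde h$ between their commodities and $s\leftrightarrow\tilde s$ between their strategies (respecting commodities) such that for every demand $\mu$ and every feasible flow $f$ of the first, the flow $\tilde f$ with $\tilde f_{\tilde s}=f_s$ is feasible for the second and $\tilde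 c_{\tilde s}(\tilde f)=c_s(f)$ for all strategies. *)

From HB Require Import structures.
From mathcomp Require Import all_boot all_order all_algebra.
From mathcomp Require Import all_classical all_reals all_analysis.
Set Implicit Arguments. Unset Strict Implicit. Unset Printing Implicit Defensive.
Import Order.TTheory GRing.Theory Num.Theory.
Import numFieldNormedType.Exports.
Local Open Scope ring_scope.

(* Represented as c : R -> R, constrained on the nonnegative reals.    *)
Definition cost_fun_ok (R : realType) (c : R -> R) : Prop :=
  [/\ (forall x : R, 0 <= x -> 0 <= c x),
      (forall x y : R, 0 <= x -> x <= y -> c x <= c y)
    & ({within [set x : R | 0 <= x], continuous c})%classic].

(* A congestion game structure (Res, c, S): Res the finite resource set,
   Com the finite commodity set, S h the family of strategies of h
   (a set of subsets of Res), c r the cost of resource r.               *)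

Definition strategies_nonempty (Res Com : finType)
  (S : Com -> {set {set Res}}) : Prop := forall h, S h != finset.set0.

(* feasible flow for demand mu: f h s is the flow of commodity h on
   strategy s (only values for s \in S h are meaningful). *)
Definition feasible_flow (R : realType) (Res Com : finType)
  (S : Com -> {set {set Res}}) (mu : Com -> R) (f : Com -> {set Res} -> R)
  : Prop :=
  forall h, (forall s, s \in S h -> 0 <= f h s) /\
            \sum_(s in S h) f h s = mu h.

Definition load (R : realType) (Res Com : finType)
  (S : Com -> {set {set Res}}) (f : Com -> {set Res} -> R) (r : Res) : R :=
  \sum_(h : Com) \sum_(s in S h | r \in s) f h s.

Definition strategy_cost (R : realType) (Res Com : finType)
  (S : Com -> {set {set Res}}) (c : Res -> R -> R)
  (f : Com -> {set Res} -> R) (s : {set Res}) : R :=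
  \sum_(r in s) c r (load S f r).

(* Equivalence of two congestion games: bijection phiH between commodities,
   and for each commodity h a bijection phiS h between S1 h and
   S2 (phiH h); for every demand mu and feasible flow f of the first game,
   the transported demand/flow (any mu2, f2 agreeing with mu, f through the
   bijections) is feasible for the second game and strategy costs agree. *)
Definition cg_equivalent (R : realType)
  (Res1 Com1 : finType) (S1 : Com1 -> {set {set Res1}}) (c1 : Res1 -> R -> R)
  (Res2 Com2 : finType) (S2 : Com2 -> {set {set Res2}}) (c2 : Res2 -> R -> R)
  : Prop :=
  exists (phiH : Com1 -> Com2) (phiS : Com1 -> {set Res1} -> {set Res2}),
  [/\ bijective phiH,
      (forall h, {in S1 h &, injective (phiS h)}),
      (forall h, phiS h @: S1 h = S2 (phiH h))
    & forall (mu : Com1 -> R) (f : Com1 -> {set Res1} -> R)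
             (mu2 : Com2 -> R) (f2 : Com2 -> {set Res2} -> R),
        (forall h, 0 <= mu h) ->
        feasible_flow S1 mu f ->
        (forall h, mu2 (phiH h) = mu h) ->
        (forall h s, s \in S1 h -> f2 (phiH h) (phiS h s) = f h s) ->
        feasible_flow S2 mu2 f2 /\
        (forall h s, s \in S1 h ->
           strategy_cost S2 c2 f2 (phiS h s) = strategy_cost S1 c1 f s)].

Definition is_path (V E : finType) (src tgt : E -> V) (O D : V)
  (P : {set E}) : Prop :=
  exists p : seq E,
    [/\ (match p with
         | [::] => O == D
         | e :: p' => [&& src e == O,
                          path (fun e1 e2 => tgt e1 == src e2) e p'
                        & last (tgt e) (map tgt p') == D]
         end),
        uniq (O :: map tgt p)
      & P = [set e in p]].

(* Two-terminal series-parallel networks: terms built from single edges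
   by series and parallel composition, and their canonical realisation
   with vertices 0 (origin), 1 (destination), 2, 3, ... (fresh inner
   vertices) and edges given as a list of (src, tgt) pairs. *)
Inductive sp_term : Type :=
| SPEdge
| SPSeries of sp_term & sp_term
| SPParallel of sp_term & sp_term.

Fixpoint sp_build (t : sp_term) (o d k : nat) : seq (nat * nat) * nat :=
  match t with
  | SPEdge => ([:: (o, d)], k)
  | SPSeries a b =>
      let '(ea, k1) := sp_build a o k k.+1 in
      let '(eb, k2) := sp_build b k d k1 in (ea ++ eb, k2)
  | SPParallel a b =>
      let '(ea, k1) := sp_build a o d k in
      let '(eb, k2) := sp_build b o d k1 in (ea ++ eb, k2)
  end.

Definition sp_edges (t : sp_term) : seq (nat * nat) := (sp_build t 0 1 2).1.
Definition sp_nverts (t : sp_term) : nat := (sp_build t 0 1 2).2.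

Definition is_series_parallel (V E : finType) (src tgt : E -> V) (O D : V)
  : Prop :=
  exists (t : sp_term) (fV : V -> nat) (fE : E -> nat),
  [/\ [/\ injective fV, (forall v, (fV v < sp_nverts t)%N) & #|V| = sp_nverts t],
      [/\ injective fE, (forall e, (fE e < size (sp_edges t))%N)
         & #|E| = size (sp_edges t)],
      fV O = 0%N, fV D = 1%N
    & forall e, nth (0%N, 0%N) (sp_edges t) (fE e) = (fV (src e), fV (tgt e))].

From HB Require Import structures.
From mathcomp Require Import all_boot all_order all_algebra.
From mathcomp Require Import all_classical all_reals all_analysis.
From mathcomp Require Import zify.
Import Order.TTheory GRing.Theory Num.Theory.
Import numFieldNormedType.Exports.

(* Number the resources r_0, ..., r_(n-1).  The network is a chain of n blocks
   of two parallel edges, followed by a single edge (so that it is a network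
   even for n = 0).  The upper edge of block i costs c_(r_i), every other edge
   costs nothing, and a strategy s is routed along the path taking the upper
   edge of block i exactly when r_i \in s.  The upper edge of block i then
   carries exactly the load of r_i, so strategy costs are preserved. *)

Lemma is_path_walk (V E : finType) (src tgt : E -> V) (g : nat -> E)
    (pos : nat -> V) (k : nat) :
  (forall i, i <= k -> src (g i) = pos i /\ tgt (g i) = pos i.+1) ->
  {in [pred i | i <= k.+1] &, injective pos} ->
  is_path src tgt (pos 0) (pos k.+1) [set e in map g (iota 0 k.+1)].
Proof.
move=> gP pos_inj; exists (map g (iota 0 k.+1)); split=> //.
- have [src_g0 _] := gP 0 (leq0n k).
  rewrite /= src_g0 eqxx path_map -map_comp last_map /=.
  apply/andP; split.
    apply/(pathP 0) => i; rewrite size_iota => lt_ik.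
    rewrite -/(iota 0 k.+1) (nth_iota _ _ (leqW lt_ik)) (nth_iota _ _ lt_ik).
    rewrite add0n add1n /=.
    by have [_ ->] := gP i (ltnW lt_ik); have [-> _] := gP i.+1 lt_ik.
  rewrite (last_nth 0) size_iota -/(iota 0 k.+1) nth_iota // add0n /=.
  by have [_ ->] := gP k (leqnn k).
- have walk_pos : map tgt (map g (iota 0 k.+1)) = map pos (iota 1 k.+1).
    have -> : iota 1 k.+1 = map succn (iota 0 k.+1) by exact: (iotaDl 1 0).
    rewrite -!map_comp; apply/eq_in_map => i.
    by rewrite mem_iota add0n ltnS => /andP[_ /gP[]].
  rewrite walk_pos -[pos 0 :: _]/(map pos (iota 0 k.+2)).
  rewrite map_inj_in_uniq ?iota_uniq // => i j.
  by rewrite !mem_iota !add0n !ltnS; apply: pos_inj.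
Qed.

Fixpoint sp_chain (k : nat) : sp_term :=
  if k is k'.+1 then SPSeries (SPParallel SPEdge SPEdge) (sp_chain k') else SPEdge.

Fixpoint chain_edges (k o d m : nat) : seq (nat * nat) :=
  if k is k'.+1 then (o, m) :: (o, m) :: chain_edges k' m d m.+1 else [:: (o, d)].

Lemma sp_build_chain k o d m :
  sp_build (sp_chain k) o d m = (chain_edges k o d m, m + k).
Proof. by elim: k o d m => [|k IHk] o d m /=; rewrite ?addn0 // IHk addSnnS. Qed.

Lemma size_chain_edges k o d m : size (chain_edges k o d m) = (k.*2).+1.
Proof. by elim: k o d m => [|k IHk] o d m //=; rewrite IHk. Qed.

(* Number given by [sp_build (sp_chain k) o d m] to the [i]-th articulation
   point of the chain, for [i <= k.+1]. *)
Definition chain_vertex (k o d m i : nat) : nat :=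
  if i == 0 then o else if i <= k then (m + i).-1 else d.

Lemma chain_vertexS k o d m i :
  chain_vertex k.+1 o d m i.+1 = chain_vertex k m d m.+1 i.
Proof. by rewrite /chain_vertex; case: i => [|i] /=; rewrite ?addn1 // ltnS addnS. Qed.

Lemma nth_chain_edges k o d m j : j <= k.*2 ->
  nth (0, 0) (chain_edges k o d m) j =
  (chain_vertex k o d m j./2, chain_vertex k o d m j./2.+1).
Proof.
elim: k o d m j => [|k IHk] o d m [|[|j]] le_jk //=.
- by rewrite /chain_vertex addn1.
- by rewrite /chain_vertex addn1.
by rewrite IHk ?chain_vertexS // -ltnS -[k.*2.+1]ltnS -doubleS.
Qed.

Section ChainNetwork.

Variable n : nat.

Definition chain_pos (i : nat) : 'I_n.+2 := inord (chain_vertex n 0 1 2 i).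
Definition chain_src (e : 'I_(n.*2).+1) : 'I_n.+2 := chain_pos e./2.
Definition chain_tgt (e : 'I_(n.*2).+1) : 'I_n.+2 := chain_pos e./2.+1.

Lemma chain_posE i : chain_pos i = chain_vertex n 0 1 2 i :> nat.
Proof. by rewrite inordK // /chain_vertex; case: ifP => // _; case: ifP. Qed.

Lemma chain_series_parallel :
  is_series_parallel chain_src chain_tgt (chain_pos 0) (chain_pos n.+1).
Proof.
exists (sp_chain n), val, val.
rewrite /sp_nverts /sp_edges sp_build_chain size_chain_edges add2n /=.
split; rewrite ?chain_posE /chain_vertex ?ltnn //.
- by split; [exact: val_inj | exact: ltn_ord | exact: card_ord].
- by split; [exact: val_inj | exact: ltn_ord | exact: card_ord].
move=> e; rewrite nth_chain_edges; last by rewrite -ltnS.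
by rewrite /chain_src /chain_tgt !chain_posE.
Qed.

(* Block [i < n] consists of the edges [2i] (upper) and [2i+1] (lower); the
   final edge is [2n]. *)
Definition chain_edge (sel : nat -> bool) (i : nat) : 'I_(n.*2).+1 :=
  inord (if i < n then i.*2 + ~~ sel i else n.*2).

Lemma chain_edgeE sel i : i <= n ->
  chain_edge sel i = (if i < n then i.*2 + ~~ sel i else n.*2) :> nat.
Proof. by move=> le_in; rewrite inordK //; case: ifP => //; case: (sel i); lia. Qed.

Lemma half_chain_edge sel i : i <= n -> (chain_edge sel i)./2 = i.
Proof.
move=> le_in; rewrite chain_edgeE //; case: ltnP => [_|le_ni].
  by rewrite addnC half_bit_double.
by rewrite doubleK; apply/eqP; rewrite eqn_leq le_in le_ni.
Qed.

Definition chain_path (sel : nat -> bool) : {set 'I_(n.*2).+1} :=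
  [set e in map (chain_edge sel) (iota 0 n.+1)].

Lemma chain_path_is_path sel :
  is_path chain_src chain_tgt (chain_pos 0) (chain_pos n.+1) (chain_path sel).
Proof.
apply: is_path_walk => [i le_in|i j]; first by rewrite /chain_src /chain_tgt half_chain_edge.
rewrite !inE => le_i le_j /(congr1 (@nat_of_ord _)); rewrite !chain_posE /chain_vertex.
by repeat case: ifP => ?; lia.
Qed.

Definition upper_edge (i : nat) : 'I_(n.*2).+1 := inord i.*2.

Lemma upper_edgeE i : i < n -> upper_edge i = i.*2 :> nat.
Proof. by move=> lt_in; rewrite inordK // ltnS leq_double ltnW. Qed.

Lemma mem_chain_path sel i : i < n -> (upper_edge i \in chain_path sel) = sel i.
Proof.
move=> lt_in; apply/idP/idP => [|sel_i]; last first.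
  rewrite inE; apply/mapP; exists i; first by rewrite mem_iota add0n ltnS (ltnW lt_in).
  by apply: ord_inj; rewrite upper_edgeE // chain_edgeE ?(ltnW lt_in) // lt_in sel_i addn0.
rewrite inE => /mapP[j]; rewrite mem_iota add0n ltnS => /andP[_ le_jn] /(congr1 (@nat_of_ord _)).
rewrite upper_edgeE // => upper_j.
have ji : j = i by rewrite -(half_chain_edge sel j le_jn) -upper_j doubleK.
by move: upper_j; rewrite chain_edgeE // ji lt_in; case: (sel i) => //=; lia.
Qed.

End ChainNetwork.

Local Open Scope ring_scope.

Lemma cost_fun_ok0 (R : realType) : cost_fun_ok (fun _ : R => 0).
Proof. by split=> //; apply: continuous_subspaceT => x; exact: cst_continuous. Qed.

Section StrategyEmbedding.

Variables (R : realType) (Res1 Res2 Com : finType).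
Variables (embed : {set Res1} -> {set Res2}) (res : Res1 -> Res2).
Hypothesis res_inj : injective res.
Hypothesis mem_embed : forall s r, (res r \in embed s) = (r \in s).

Definition pushforward_cost (c : Res1 -> R -> R) (e : Res2) : R -> R :=
  if [pick r | res r == e] is Some r then c r else fun=> 0.

Lemma pushforward_costE c r : pushforward_cost c (res r) = c r.
Proof.
rewrite /pushforward_cost; case: pickP => [r' /eqP/res_inj -> //|].
by move/(_ r); rewrite eqxx.
Qed.

Lemma pushforward_cost_codom c e x :
  e \notin codom res -> pushforward_cost c e x = 0.
Proof.
rewrite /pushforward_cost; case: pickP => // r /eqP <-.
by rewrite codom_f.
Qed.

Lemma pushforward_cost_ok c :
  (forall r, cost_fun_ok (c r)) -> forall e, cost_fun_ok (pushforward_cost c e).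
Proof.
move=> c_ok e; rewrite /pushforward_cost; case: pickP => [r _|_] //.
exact: cost_fun_ok0.
Qed.

Lemma embed_inj : injective embed.
Proof. by move=> s1 s2 embed_s; apply/setP => r; rewrite -!mem_embed embed_s. Qed.

Variable S : Com -> {set {set Res1}}.
Local Notation S2 := (fun h => embed @: S h).

Section TransportedFlow.

Variables (f : Com -> {set Res1} -> R) (f2 : Com -> {set Res2} -> R).
Hypothesis f2_embed : forall h s, s \in S h -> f2 h (embed s) = f h s.

Lemma load_embed r : load S2 f2 (res r) = load S f r.
Proof.
apply: eq_bigr => h _; rewrite big_mkcondr big_imset; last by move=> ? ? _ _; exact: embed_inj.
by rewrite [RHS]big_mkcondr; apply: eq_bigr => s S_s; rewrite mem_embed f2_embed.
Qed.

Lemma strategy_cost_embed c s :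
  strategy_cost S2 (pushforward_cost c) f2 (embed s) = strategy_cost S c f s.
Proof.
rewrite /strategy_cost (bigID [pred e | e \in codom res]) /=.
rewrite [X in _ + X]big1 ?addr0 => [|e /andP[_ /pushforward_cost_codom->]] //.
rewrite (eq_bigl [in res @: s]) => [|e].
  rewrite big_imset; last by move=> ? ? _ _; exact: res_inj.
  by apply: eq_bigr => r _; rewrite pushforward_costE load_embed.
apply/andP/imsetP => [[embed_e /codomP[r e_r]]|[r s_r ->]].
  by exists r; rewrite // -mem_embed -e_r.
by rewrite mem_embed codom_f.
Qed.

End TransportedFlow.

Lemma cg_equivalent_embed c : cg_equivalent S c S2 (pushforward_cost c).
Proof.
have embed_inj_in h : {in S h &, injective embed} by move=> ? ? _ _; exact: embed_inj.
exists id, (fun=> embed); split=> //; first by exists id.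
move=> mu f mu2 f2 _ f_feas mu2E f2E; split=> [h|h s _]; last exact: strategy_cost_embed.
split=> [_ /imsetP[s S_s ->]|]; first by rewrite f2E //; exact: (f_feas h).1.
rewrite big_imset //= mu2E -(f_feas h).2.
by apply: eq_bigr => s; exact: f2E.
Qed.

End StrategyEmbedding.

Section ResourceChain.

Variable Res : finType.

Definition res_edge (r : Res) : 'I_(#|Res|.*2).+1 := upper_edge #|Res| (enum_rank r).

Definition strategy_path (s : {set Res}) : {set 'I_(#|Res|.*2).+1} :=
  chain_path #|Res| (nth false [seq r \in s | r <- enum Res]).

Lemma res_edge_inj : injective res_edge.
Proof.
move=> r1 r2 /(congr1 (@nat_of_ord _)); rewrite !upper_edgeE // => /double_inj.
by move/val_inj/enum_rank_inj.
Qed.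

Lemma mem_strategy_path s r : (res_edge r \in strategy_path s) = (r \in s).
Proof.
by rewrite mem_chain_path // (nth_map r) ?nth_enum_rank // -cardE.
Qed.

End ResourceChain.

Theorem proposition5p1 (R : realType) (Res Com : finType)
  (S : Com -> {set {set Res}}) (c : Res -> R -> R) :
  strategies_nonempty S ->
  (forall r, cost_fun_ok (c r)) ->
  exists (V E : finType) (src tgt : E -> V) (O D : V)
         (Com2 : finType) (P : Com2 -> {set {set E}}) (ce : E -> R -> R),
    [/\ is_series_parallel src tgt O D,
        (forall e, cost_fun_ok (ce e)),
        strategies_nonempty P,
        (forall h p, p \in P h -> is_path src tgt O D p)
      & cg_equivalent S c P ce].
Proof.
move=> S_nonempty c_ok; set n := #|Res|.
exists _, _, (chain_src n), (chain_tgt n), (chain_pos n 0), (chain_pos n n.+1),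
  Com, (fun h => @strategy_path Res @: S h),
  (@pushforward_cost R _ _ (@res_edge Res) c).
split.
- exact: chain_series_parallel.
- exact: pushforward_cost_ok.
- by move=> h; rewrite imset_eq0.
- by move=> h _ /imsetP[s _ ->]; exact: chain_path_is_path.
- apply: cg_equivalent_embed; [exact: res_edge_inj | exact: mem_strategy_path].
Qed.
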